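(* Let $N\ge1$, $f_1,\dots,f_N,g_1,\dots,g_N\in\mathbb C$ with $S:=\sum_{n=1}^N|f_n||g_n|>0$, and let $P^{\max}>0$, $\sigma^2>0$, $L_0>0$, $d_{\mathrm t},d_{\mathrm r}>0$, $\alpha,\beta>0$. Set $\varrho_g^2=L_0d_{\mathrm t}^{-\alpha}$, $\varrho_f^2=L_0d_{\mathrm r}^{-\beta}$, $\sigma_v^2=\sigma^2$, $P_{\mathrm{BS\text{-}P}}^{\max}=P^{\max}$ and $P_{\mathrm{BS\text{-}A}}^{\max}=P_{\mathrm A}^{\max}=P^{\max}/2$. Define $$\gamma_{\mathrm{passive}}=\frac{P_{\mathrm{BS\text{-}P}}^{\max}S^2}{\sigma^2},\qquad \gamma_{\mathrm{active}}=\frac{P_{\mathrm{BS\text{-}A}}^{\max}P_{\mathrm A}^{\max}S^2}{N\left(P_{\mathrm A}^{\max}\sigma_v^2\varrho_f^2+P_{\mathrm{BS\text{-}A}}^{\max}\sigma^2\varrho_g^2+\sigma^2\sigma_v^2\right)}.$$ If $\gamma_{\mathrm{active}}\ge\gamma_{\mathrm{passive}}$, then $P^{\max}>4N\sigma^2$ and $$\frac{1}{d_{\mathrm t}^{-\alpha}+d_{\mathrm r}^{-\beta}}\ \ge\ \frac{2NP^{\max}L_0}{P^{\max}-4N\sigma^2}.$$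
   Context: Two single-user single-antenna systems aided by an $N$-element RIS; $g_n$ are BS–RIS and $f_n$ RIS–user channel coefficients, with far-field path losses $\varrho_g^2=L_0d_{\mathrm t}^{-\alpha}$ (BS–RIS distance $d_{\mathrm t}$, exponent $\alpha$) and $\varrho_f^2=L_0d_{\mathrm r}^{-\beta}$ (RIS–user distance $d_{\mathrm r}$, exponent $\beta$), $L_0$ the path loss at 1 m, total radiated power $P^{\max}$. $\gamma_{\mathrm{passive}}$ is the maximal SNR with a passive RIS; the exact maximal SNR with an active RIS (equal amplification, RIS noise power $\sigma_v^2$) is $\frac{P_{\mathrm{BS\text{-}A}}^{\max}P_{\mathrm A}^{\max}S^2}{P_{\mathrm A}^{\max}\sigma_v^2\sum_n|f_n|^2+\sigma^2(P_{\mathrm{BS\text{-}A}}^{\max}\sum_n|g_n|^2+N\sigma_v^2)}$, and $\gamma_{\mathrm{active}}$ above is this with $\frac1N\sum_n|f_n|^2$ and $\frac1N\sum_n|g_n|^2$ replaced by $\varrho_f^2$ and $\varrho_g^2$ (large-$N$ approximation). *)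

From Stdlib Require Import Reals.
From Coquelicot Require Import Coquelicot.
Open Scope R_scope.

(* S = sum_{n=1}^N |f_n| |g_n|, with indices shifted to 0..N-1. *)
Definition S_sum (N : nat) (f g : nat -> C) : R :=
  sum_n (fun n => Cmod (f n) * Cmod (g n)) (N - 1)%nat.

Definition gamma_passive (PBSP sigma2 S : R) : R := PBSP * S ^ 2 / sigma2.

Definition gamma_active (N : nat) (PBSA PA sigma2 sigmav2 rhof2 rhog2 S : R) : R :=
  PBSA * PA * S ^ 2 /
  (INR N * (PA * sigmav2 * rhof2 + PBSA * sigma2 * rhog2 + sigma2 * sigmav2)).

(** Clearing the denominators in [gamma_active >= gamma_passive] and dividing by
    [Pmax S^2 sigma2 / 4] leaves the power budget
    [2 N Pmax L0 (dt^-alpha + dr^-beta) + 4 N sigma2 <= Pmax];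
    its left summand is positive, which gives both claims. *)

From Stdlib Require Import Reals Lra Psatz.
From Coquelicot Require Import Coquelicot.
Open Scope R_scope.

Lemma Rpower_pos (x y : R) : 0 < Rpower x y.
Proof. exact (exp_pos _). Qed.

Lemma gamma_active_ge_passive_cross (N : nat)
  (PBSP PBSA PA sigma2 sigmav2 rhof2 rhog2 S : R) :
  0 < INR N -> 0 < S -> 0 < sigma2 ->
  0 < PA * sigmav2 * rhof2 + PBSA * sigma2 * rhog2 + sigma2 * sigmav2 ->
  gamma_active N PBSA PA sigma2 sigmav2 rhof2 rhog2 S >= gamma_passive PBSP sigma2 S ->
  PBSP * (INR N * (PA * sigmav2 * rhof2 + PBSA * sigma2 * rhog2 + sigma2 * sigmav2))
    <= PBSA * PA * sigma2.
Proof.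
  unfold gamma_active, gamma_passive.
  set (D := INR N * (PA * sigmav2 * rhof2 + PBSA * sigma2 * rhog2 + sigma2 * sigmav2)).
  intros Hn HS Hs Hsum H.
  assert (HD : 0 < D) by (unfold D; nra).
  assert (HS2 : 0 < S ^ 2) by (apply pow_lt; exact HS).
  apply Rge_le, (Rmult_le_compat_r (D * sigma2 / S ^ 2)) in H;
    [| apply Rlt_le, Rdiv_lt_0_compat; nra].
  replace (PBSP * S ^ 2 / sigma2 * (D * sigma2 / S ^ 2)) with (PBSP * D) in H
    by (field; lra).
  replace (PBSA * PA * S ^ 2 / D * (D * sigma2 / S ^ 2)) with (PBSA * PA * sigma2) in H
    by (field; lra).
  exact H.
Qed.

Lemma equal_split_power_budget (n P s L0 a b : R) :
  0 < P -> 0 < s ->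
  P * (n * (P / 2 * s * (L0 * b) + P / 2 * s * (L0 * a) + s * s)) <= P / 2 * (P / 2) * s ->
  2 * n * P * L0 * (a + b) + 4 * n * s <= P.
Proof.
  intros HP Hs H.
  apply (Rmult_le_reg_l (P * s / 4)); [nra |].
  replace (P * s / 4 * (2 * n * P * L0 * (a + b) + 4 * n * s))
    with (P * (n * (P / 2 * s * (L0 * b) + P / 2 * s * (L0 * a) + s * s))) by field.
  replace (P * s / 4 * P) with (P / 2 * (P / 2) * s) by field.
  exact H.
Qed.

Lemma Rdiv_le_inv_of_mul_le (k x y : R) :
  0 < k -> 0 < x -> k * x <= y -> k / y <= 1 / x.
Proof.
  intros Hk Hx H.
  assert (Hy : 0 < y) by nra.
  apply (Rmult_le_reg_r (x * y)); [nra |].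
  replace (k / y * (x * y)) with (k * x) by (field; lra).
  replace (1 / x * (x * y)) with y by (field; lra).
  exact H.
Qed.

Theorem lemma4 (N : nat) (f g : nat -> C)
  (Pmax sigma2 L0 dt dr alpha beta : R) :
  (1 <= N)%nat ->
  0 < S_sum N f g ->
  0 < Pmax -> 0 < sigma2 -> 0 < L0 -> 0 < dt -> 0 < dr -> 0 < alpha -> 0 < beta ->
  let rhog2 := L0 * Rpower dt (- alpha) in
  let rhof2 := L0 * Rpower dr (- beta) in
  let sigmav2 := sigma2 in
  let PBSP := Pmax in
  let PBSA := Pmax / 2 in
  let PA := Pmax / 2 in
  gamma_active N PBSA PA sigma2 sigmav2 rhof2 rhog2 (S_sum N f g)
    >= gamma_passive PBSP sigma2 (S_sum N f g) ->
  Pmax > 4 * INR N * sigma2 /\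
  1 / (Rpower dt (- alpha) + Rpower dr (- beta))
    >= 2 * INR N * Pmax * L0 / (Pmax - 4 * INR N * sigma2).
Proof.
  intros HN HS HP Hs HL _ _ _ _ rhog2 rhof2 sigmav2 PBSP PBSA PA Hgamma.
  pose proof (Rpower_pos dt (- alpha)) as Ha.
  pose proof (Rpower_pos dr (- beta)) as Hb.
  pose proof (lt_0_INR N HN) as Hn.
  assert (Hsum : 0 < PA * sigmav2 * rhof2 + PBSA * sigma2 * rhog2 + sigma2 * sigmav2).
  { unfold PA, PBSA, sigmav2, rhof2, rhog2.
    assert (0 < Pmax / 2 * sigma2 * L0) by (apply Rmult_lt_0_compat; nra).
    nra. }
  pose proof (gamma_active_ge_passive_cross _ _ _ _ _ _ _ _ _ Hn HS Hs Hsum Hgamma)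
    as Hcross.
  pose proof (equal_split_power_budget _ _ _ _ _ _ HP Hs Hcross) as Hbudget.
  assert (Hk : 0 < 2 * INR N * Pmax * L0) by (repeat apply Rmult_lt_0_compat; lra).
  assert (Hgain : 0 < 2 * INR N * Pmax * L0 * (Rpower dt (- alpha) + Rpower dr (- beta)))
    by nra.
  split; [lra |].
  apply Rle_ge, Rdiv_le_inv_of_mul_le; lra.
Qed.
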